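(* Let $U$ be a complete two-phase quantum walk. Then $U$ is unitary equivalent to \begin{align*} U_{r_+,r_-,\sigma_1,\sigma_2}={}&\sum_{n\ge0}|e_1^{n-1}\rangle\langle r_+e_1^n+s_+e_2^n|+|e_2^{n+1}\rangle\langle -e^{i\sigma_1}s_+e_1^n+e^{i\sigma_1}r_+e_2^n|\\ &+\sum_{n\le-1}|e_1^{n-1}\rangle\langle r_-e_1^n+e^{i\sigma_2}s_-e_2^n|+|e_2^{n+1}\rangle\langle -s_-e_1^n+e^{i\sigma_2}r_-e_2^n| \end{align*} for some $0\le r_+,r_-\le1$ and $\sigma_1,\sigma_2\in\mathbb R$, where $s_\varepsilon=\sqrt{1-r_\varepsilon^2}$ ($\varepsilon=+,-$). Moreover, writing $U_{r,\sigma}=U_{r_+,r_-,\sigma_1,\sigma_2}$, if $0<r_\varepsilon,r'_\varepsilon<1$ and $\sigma_i,\sigma'_i\in[0,2\pi)$, then $U_{r,\sigma}$ and $U_{r',\sigma'}$ are unitary equivalent if and only if $r=r'$ and $\sigma=\sigma'$.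
   Context: Let $\mathcal H_n=\mathbb C^2$ for $n\in\mathbb Z$, $\mathcal H=\bigoplus_{n\in\mathbb Z}\mathcal H_n$, $P_n$ the orthogonal projection onto $\mathcal H_n$, and $\{e_1^n,e_2^n\}$ the standard basis of $\mathcal H_n$; each $\mathcal H_n$ is identified with $\mathbb C^2$. Dirac notation: $|x\rangle\langle y|$ is the operator $z\mapsto\langle y,z\rangle x$ (inner product conjugate-linear in the first argument). A one-dimensional quantum walk is a unitary $U$ on $\mathcal H$ with $\operatorname{rank}(P_nUP_m)=1$ if $m=n\pm1$ and $0$ otherwise. Every such $U$ can be written as $U=\sum_{n\in\mathbb Z}|\xi_{n-1,n}\rangle\langle\zeta_{n-1,n}|+|\xi_{n+1,n}\rangle\langle\zeta_{n+1,n}|$, where $\{\xi_{n,n+1},\xi_{n+1,n}\}_{n}$ and $\{\zeta_{n,n+1},\zeta_{n+1,n}\}_{n}$ are orthonormal bases of $\mathcal H$ with $\xi_{n,n+1},\zeta_{n+1,n}\in\mathcal H_n$ and $\xi_{n+1,n},\zeta_{n,n+1}\in\mathcal H_{n+1}$. $U$ is a complete two-phase quantum walk if it has such a representation for which there exist $\xi_1^\pm,\xi_2^\pm,\zeta_1^\pm,\zeta_2^\pm\in\mathbb C^2$ with $\xi_{n,n+1}=\xi_1^+$, $\xi_{n,n-1}=\xi_2^+$, $\zeta_{n-1,n}=\zeta_1^+$, $\zeta_{n+1,n}=\zeta_2^+$ for all $n\ge0$, and $\xi_{n,n+1}=\xi_1^-$, $\xi_{n,n-1}=\xi_2^-$,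 $\zeta_{n-1,n}=\zeta_1^-$, $\zeta_{n+1,n}=\zeta_2^-$ for all $n\le-1$. Since $U$ and $e^{i\lambda}U$ are identified, unitaries $U_1,U_2$ on $\mathcal H$ are called unitary equivalent if there exist $\lambda\in\mathbb R$ and a unitary $W=\bigoplus_nW_n$ ($W_n$ unitary on $\mathcal H_n$) with $e^{i\lambda}WU_1W^*=U_2$. *)

From HB Require Import structures.
From mathcomp Require Import all_boot all_order all_algebra.
From mathcomp Require Import reals trigo.
From mathcomp Require Import complex.
Set Implicit Arguments. Unset Strict Implicit. Unset Printing Implicit Defensive.
Import Order.TTheory GRing.Theory Num.Theory.
Local Open Scope ring_scope.

Section QW.
Variable R : realType.
Local Notation C := R[i].

Definition vec2 (a b : C) : 'cV[C]_2 := \col_(i < 2) (if i == ord0 then a else b).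
Definition e1 : 'cV[C]_2 := vec2 1 0.
Definition e2 : 'cV[C]_2 := vec2 0 1.

Definition adjmx m n (A : 'M[C]_(m, n)) : 'M[C]_(n, m) := (map_mx (@conjc R) A)^T.

(* |x><y| on C^2 (inner product conjugate-linear in the first argument) *)
Definition ketbra (x y : 'cV[C]_2) : 'M[C]_2 := x *m adjmx y.

Definition expi (t : R) : C := Complex (cos t) (sin t).
Definition rC (x : R) : C := Complex x 0.

Definition unitary2 (W : 'M[C]_2) : Prop := adjmx W *m W = 1%:M /\ W *m adjmx W = 1%:M.

(* Operators on H = (+)_{n in Z} C^2 are represented by their blocks:
   K n m = P_n K P_m viewed as a 2x2 matrix, entries <e_i^n, K e_j^m>. *)
Definition blockop := int -> int -> 'M[C]_2.

Definition adjop (K : blockop) : blockop := fun n m => adjmx (K m n).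
Definition idop : blockop := fun n m => if n == m then 1%:M else 0.
(* product of block operators whose left factor has blocks only at |n-k| <= 1 *)
Definition comp1 (K L : blockop) : blockop :=
  fun n m => \sum_(k <- [:: n - 1; n; n + 1]) K n k *m L k m.

Definition quantum_walk (U : blockop) : Prop :=
  (forall n m : int, \rank (U n m) = (if (m == n + 1) || (m == n - 1) then 1%N else 0%N))
  /\ comp1 (adjop U) U = idop /\ comp1 U (adjop U) = idop.

Definition onb2 (u v : 'cV[C]_2) : Prop :=
  adjmx u *m u = 1%:M /\ adjmx v *m v = 1%:M /\ adjmx u *m v = 0.

(* Representation data: xi a b in H_a, zeta a b in H_b (for |a - b| = 1).
   {xi_{n,n+1}, xi_{n+1,n}}_n is an ONB of H with vectors xi_{n,n+1}, xi_{n,n-1}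
   lying in H_n, i.e. an ONB of each H_n; similarly zeta_{n+1,n}, zeta_{n-1,n} in H_n. *)
Definition qw_representation (U : blockop) (xi zeta : int -> int -> 'cV[C]_2) : Prop :=
  (forall n : int, onb2 (xi n (n + 1)) (xi n (n - 1)))
  /\ (forall n : int, onb2 (zeta (n - 1) n) (zeta (n + 1) n))
  /\ (forall n m : int, U n m =
        if n == m - 1 then ketbra (xi (m - 1) m) (zeta (m - 1) m)
        else if n == m + 1 then ketbra (xi (m + 1) m) (zeta (m + 1) m)
        else 0).

Definition complete_two_phase (U : blockop) : Prop :=
  quantum_walk U /\
  exists (xi zeta : int -> int -> 'cV[C]_2)
         (xi1p xi2p zeta1p zeta2p xi1m xi2m zeta1m zeta2m : 'cV[C]_2),
    qw_representation U xi zeta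
    /\ (forall n : int, 0 <= n ->
          [/\ xi n (n + 1) = xi1p, xi n (n - 1) = xi2p,
              zeta (n - 1) n = zeta1p & zeta (n + 1) n = zeta2p])
    /\ (forall n : int, n <= -1 ->
          [/\ xi n (n + 1) = xi1m, xi n (n - 1) = xi2m,
              zeta (n - 1) n = zeta1m & zeta (n + 1) n = zeta2m]).

Definition unitary_equiv (U1 U2 : blockop) : Prop :=
  exists (lam : R) (W : int -> 'M[C]_2),
    (forall n, unitary2 (W n)) /\
    forall n m : int, expi lam *: (W n *m U1 n m *m adjmx (W m)) = U2 n m.

Definition sfun (r : R) : R := Num.sqrt (1 - r ^+ 2).

Definition Uparam (rp rm s1 s2 : R) : blockop := fun n m =>
  if n == m - 1 then
    ketbra e1 (if 0 <= m then vec2 (rC rp) (rC (sfun rp))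
               else vec2 (rC rm) (expi s2 * rC (sfun rm)))
  else if n == m + 1 then
    ketbra e2 (if 0 <= m then vec2 (- (expi s1 * rC (sfun rp))) (expi s1 * rC rp)
               else vec2 (- rC (sfun rm)) (expi s2 * rC rm))
  else 0.

End QW.

From Pilot Require Import Defs.
From HB Require Import structures.
From mathcomp Require Import all_boot all_order all_algebra.
From mathcomp Require Import reals trigo.
From mathcomp Require Import complex.
From mathcomp Require Import ring lra zify.
Import Order.TTheory GRing.Theory Num.Theory.
Local Open Scope ring_scope.

(* Conjugating U by the gauge W = (+)_n W_n, W_n = e^(i th_n) |e_1><xi_{n,n+1}|
   + e^(i ph_n) |e_2><xi_{n,n-1}|, turns every block of U into |e_1><.| or |e_2><.|,
   whose bra has as coordinates the overlaps <xi, zeta> at one site times phases.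
   On each half-line these overlaps form a fixed 2x2 unitary matrix, with polar
   normal form (r e^(ia), s e^(ib); -s e^(i(g-b)), r e^(i(g-a))), s = sqrt(1 - r^2);
   the phases th_n, ph_n and lam can then be chosen, by a linear recursion in n, so
   that only sigma_1 and sigma_2 survive.
   Conversely, unitary equivalence multiplies every loop trace
   tr (U_{n,n+1} U_{n+1,n}) by the same factor e^(2 i lam). For U_{r,sigma} these
   traces are -s_+^2 e^(-i sigma_1) (n >= 0), -s_+ s_- (n = -1) and
   -s_-^2 e^(-i sigma_2) (n <= -2): the negative real value at n = -1 forces
   e^(2 i lam) = 1, after which the values at n = 0 and n = -2 determine r and sigma. *)

Section TwoPhaseQuantumWalks.
Local Set Implicit Arguments.
Local Unset Strict Implicit.
Variable R : realType.
Local Notation C := R[i].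
Local Notation vec := 'cV[C]_2.
Local Notation e1 := (Defs.e1 R).
Local Notation e2 := (Defs.e2 R).
Implicit Types (r s a b : R) (z w : C) (p q x y : vec) (U : blockop R).

Lemma rCE r : rC r = (r%:C)%C. Proof. by []. Qed.
Lemma rCD r s : rC (r + s) = rC r + rC s. Proof. by rewrite !rCE rmorphD. Qed.
Lemma rCM r s : rC (r * s) = rC r * rC s. Proof. by rewrite !rCE rmorphM. Qed.
Lemma rCX r n : rC (r ^+ n) = rC r ^+ n. Proof. by rewrite !rCE rmorphXn. Qed.
Lemma rC_inj : injective (@rC R). Proof. by move=> r s []. Qed.
Lemma conjcD z w : conjc (z + w) = conjc z + conjc w. Proof. exact: rmorphD. Qed.
Lemma conjcN z : conjc (- z) = - conjc z. Proof. exact: rmorphN. Qed.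
Lemma conjcM z w : conjc (z * w) = conjc z * conjc w. Proof. exact: rmorphM. Qed.
Lemma conj_rC r : conjc (rC r) = rC r. Proof. exact: conjc_real. Qed.

Lemma conj_expi a : conjc (expi a) = expi (- a).
Proof. by rewrite /expi /conjc cosN sinN. Qed.

Lemma expiD a b : expi (a + b) = expi a * expi b.
Proof.
rewrite /expi cosD sinD; apply/eqP; rewrite eq_complex /=.
by apply/andP; split; apply/eqP; ring.
Qed.

Lemma expi0 : expi 0 = 1 :> C.
Proof. by rewrite /expi cos0 sin0. Qed.

Lemma expi_mulN a : expi a * expi (- a) = 1.
Proof. by rewrite -expiD subrr expi0. Qed.

Lemma expi_rotate z a b : expi a * (z * expi b) = z * expi (a + b).
Proof. by rewrite mulrCA expiD. Qed.

Lemma normsq_polar r a : conjc (rC r * expi a) * (rC r * expi a) = rC (r ^+ 2).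
Proof.
rewrite conjcM conj_rC conj_expi rCX.
by rewrite mulrACA [expi _ * _]mulrC expi_mulN mulr1 expr2.
Qed.

Lemma polar z : exists r a, 0 <= r /\ z = rC r * expi a.
Proof.
case: z => x y; set r := Num.sqrt (x ^+ 2 + y ^+ 2).
have r_ge0 : 0 <= r by apply: sqrtr_ge0.
have rr : r ^+ 2 = x ^+ 2 + y ^+ 2 by rewrite sqr_sqrtr // addr_ge0 ?sqr_ge0.
have [r0 | r_neq0] := eqVneq r 0.
  have /eqP : x ^+ 2 + y ^+ 2 = 0 by rewrite -rr r0 expr0n.
  rewrite paddr_eq0 ?sqr_ge0 // !sqrf_eq0 => /andP[/eqP-> /eqP->].
  by exists 0, 0; rewrite mul0r.
set c := x / r; set d := y / r.
have cd : c ^+ 2 + d ^+ 2 = 1.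
  by rewrite /c /d !expr_div_n -mulrDl -rr divff // sqrf_eq0.
have c_bnd : -1 <= c <= 1.
  have : c ^+ 2 <= 1 by rewrite -cd lerDl sqr_ge0.
  by move=> h; apply/andP; split; nra.
have cos_c : cos (acos c) = c by apply: acosK; rewrite in_itv.
have sin_c : sin (acos c) = `|d| by rewrite sin_acos // -cd addrC addKr sqrtr_sqr.
have xE : x = r * c by rewrite /c mulrC divfK.
have yE : y = r * d by rewrite /d mulrC divfK.
have [d_ge0 | d_lt0] := lerP 0 d.
  exists r, (acos c); rewrite /rC /expi cos_c sin_c ger0_norm //.
  by split=> //; apply/eqP; rewrite eq_complex /= xE yE; apply/andP; split; apply/eqP; ring.
exists r, (- acos c); rewrite /rC /expi cosN sinN cos_c sin_c ltr0_norm //.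
by split=> //; apply/eqP; rewrite eq_complex /= xE yE; apply/andP; split; apply/eqP; ring.
Qed.

Lemma polar_inj r r' a a' : 0 < r -> 0 < r' ->
  rC r * expi a = rC r' * expi a' -> r = r' /\ expi a = expi a'.
Proof.
move=> r_gt0 r'_gt0 e.
have /eqP : r ^+ 2 = r' ^+ 2.
  by apply: rC_inj; rewrite -(normsq_polar r a) -(normsq_polar r' a') e.
rewrite eqrXn2 ?ltW // => /eqP rr'; split=> //.
move: e; rewrite -rr'; apply: mulfI.
by apply/eqP => /(@rC_inj _ 0) /eqP; rewrite gt_eqF.
Qed.

Lemma expi_inj a b : 0 <= a < 2 * pi -> 0 <= b < 2 * pi -> expi a = expi b -> a = b.
Proof.
have sin_lt0 c : pi < c < 2 * pi -> sin c < 0.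
  move=> /andP[? ?]; rewrite -[c](subrK pi) sinDpi oppr_lt0.
  by apply: sin_gt0_pi; apply/andP; split; lra.
move=> /andP[a_ge0 a_lt] /andP[b_ge0 b_lt] [ecos esin].
have pi_gt0 := @pi_gt0 R.
have [a_le | a_gt] := lerP a pi; have [b_le | b_gt] := lerP b pi.
- by apply: cos_inj; rewrite // in_itv /= ?a_ge0 ?b_ge0.
- have : 0 <= sin a by apply: sin_ge0_pi; apply/andP.
  have : sin b < 0 by apply: sin_lt0; apply/andP.
  lra.
- have : 0 <= sin b by apply: sin_ge0_pi; apply/andP.
  have : sin a < 0 by apply: sin_lt0; apply/andP.
  lra.
- suff : a - pi = b - pi by lra.
  apply: cos_inj; rewrite ?in_itv /=; try by apply/andP; split; lra.
  by apply: oppr_inj; rewrite -!cosDpi !subrK.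
Qed.

Definition inner (p x : vec) : C := (adjmx p *m x) ord0 ord0.

Lemma adjmxE m n (A : 'M[C]_(m, n)) i j : adjmx A i j = conjc (A j i).
Proof. by rewrite !mxE. Qed.

Lemma adjmxK m n : cancel (@adjmx R m n) (@adjmx R n m).
Proof. by move=> A; apply/matrixP => i j; rewrite !adjmxE conjcK. Qed.

Lemma adjmxD m n (A B : 'M[C]_(m, n)) : adjmx (A + B) = adjmx A + adjmx B.
Proof. by apply/matrixP => i j; rewrite !mxE conjcD. Qed.

Lemma adjmxZ m n z (A : 'M[C]_(m, n)) : adjmx (z *: A) = conjc z *: adjmx A.
Proof. by apply/matrixP => i j; rewrite !mxE conjcM. Qed.

Lemma adjmx_mul m n k (A : 'M[C]_(m, n)) (B : 'M[C]_(n, k)) :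
  adjmx (A *m B) = adjmx B *m adjmx A.
Proof. by rewrite /adjmx map_mxM trmx_mul. Qed.

Lemma adjmx1 n : adjmx (1%:M : 'M[C]_n) = 1%:M.
Proof. by rewrite /adjmx map_mx1 trmx1. Qed.

Lemma innerE p x :
  inner p x = conjc (p ord0 ord0) * x ord0 ord0 + conjc (p ord_max ord0) * x ord_max ord0.
Proof.
rewrite /inner mxE big_ord_recl big_ord1 !mxE.
by have -> : lift ord0 ord0 = ord_max :> 'I_2 by apply: val_inj.
Qed.

Lemma inner_vec2 z1 z2 w1 w2 :
  inner (vec2 z1 z2) (vec2 w1 w2) = conjc z1 * w1 + conjc z2 * w2.
Proof. by rewrite innerE !mxE. Qed.

Lemma inner_e1 z1 z2 : inner (vec2 z1 z2) e1 = conjc z1.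
Proof. by rewrite inner_vec2 mulr1 mulr0 addr0. Qed.

Lemma inner_e2 z1 z2 : inner (vec2 z1 z2) e2 = conjc z2.
Proof. by rewrite inner_vec2 mulr1 mulr0 add0r. Qed.

Lemma inner_conj p x : inner x p = conjc (inner p x).
Proof. by rewrite !innerE conjcD !conjcM !conjcK; ring. Qed.

Lemma adjmx_mulmx (p x : vec) : adjmx p *m x = (inner p x)%:M.
Proof. by apply/matrixP => i j; rewrite !ord1 [RHS]mxE eqxx mulr1n. Qed.

Lemma vec2Z z z1 z2 : z *: vec2 z1 z2 = vec2 (z * z1) (z * z2).
Proof. by apply/matrixP => i j; rewrite !mxE; case: ifP. Qed.

Lemma vec2_e1 z : vec2 z 0 = z *: e1.
Proof. by rewrite vec2Z mulr1 mulr0. Qed.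

Lemma vec2_e2 z : vec2 0 z = z *: e2.
Proof. by rewrite vec2Z mulr1 mulr0. Qed.

Lemma onb2_inner p q : onb2 p q ->
  [/\ inner p p = 1, inner q q = 1, inner p q = 0 & inner q p = 0].
Proof. by case=> pp [qq pq]; rewrite (inner_conj p q) /inner pp qq pq !mxE /= oppr0. Qed.

Lemma ketbra_mulmx (x y p : vec) : ketbra x y *m p = inner y p *: x.
Proof. by rewrite /ketbra -mulmxA adjmx_mulmx mul_mx_scalar. Qed.

Lemma ketbra_mul (x y p q : vec) : ketbra x y *m ketbra p q = inner y p *: ketbra x q.
Proof. by rewrite {1}/ketbra mulmxA ketbra_mulmx -scalemxAl. Qed.

Lemma mxtrace_ketbra (x y : vec) : \tr (ketbra x y) = inner y x.
Proof. by rewrite mxtrace_mulC adjmx_mulmx mxtrace_scalar. Qed.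

Lemma adjmx_ketbra (x y : vec) : adjmx (ketbra x y) = ketbra y x.
Proof. by rewrite /ketbra adjmx_mul adjmxK. Qed.

Lemma ketbraZl z (x y : vec) : ketbra (z *: x) y = z *: ketbra x y.
Proof. by rewrite /ketbra scalemxAl. Qed.

Lemma ketbraZr z (x y : vec) : ketbra x (z *: y) = conjc z *: ketbra x y.
Proof. by rewrite /ketbra adjmxZ scalemxAr. Qed.

Lemma ketbra_scale z x y : z *: ketbra x y = ketbra x (conjc z *: y).
Proof. by rewrite ketbraZr conjcK. Qed.

Lemma ketbra_conj (A B : 'M[C]_2) (x y : vec) :
  A *m ketbra x y *m adjmx B = ketbra (A *m x) (B *m y).
Proof. by rewrite /ketbra adjmx_mul !mulmxA. Qed.

Lemma ketbra_e1e2 : ketbra e1 e1 + ketbra e2 e2 = 1%:M :> 'M[C]_2.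
Proof.
apply/matrixP => i j; rewrite !mxE !big_ord1 !mxE.
by case: i j => [[|[|//]] ?] [[|[|//]] ?]; simpc.
Qed.

Definition frame z w (p q : vec) : 'M[C]_2 := ketbra (z *: e1) p + ketbra (w *: e2) q.

Lemma frame_mulmx z w p q x :
  frame z w p q *m x = vec2 (z * inner p x) (w * inner q x).
Proof.
rewrite mulmxDl !ketbra_mulmx !scalerA /e1 /e2 !vec2Z.
by apply/matrixP => i j; rewrite !mxE; case: ifP => _; rewrite !mulr0 ?addr0 ?add0r mulr1 mulrC.
Qed.

Lemma frame_unitary z w p q : onb2 p q ->
  z * conjc z = 1 -> w * conjc w = 1 -> unitary2 (frame z w p q).
Proof.
move=> /onb2_inner[pp qq pq qp] zz ww.
suff frame_coisometry : frame z w p q *m adjmx (frame z w p q) = 1%:M.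
  by split=> //; apply: mulmx1C.
rewrite adjmxD !adjmx_ketbra mulmxDl !mulmxDr !ketbra_mul pp qq pq qp.
by rewrite !scale0r addr0 add0r !scale1r !ketbraZl !ketbraZr !scalerA zz ww !scale1r ketbra_e1e2.
Qed.

Lemma parseval p q x y : onb2 p q ->
  inner x y = conjc (inner p x) * inner p y + conjc (inner q x) * inner q y.
Proof.
move=> onb_pq; set W := frame 1 1 p q.
have [W_iso _] : unitary2 W by apply: frame_unitary; rewrite // conjc1 mulr1.
have -> : inner x y = inner (W *m x) (W *m y).
  by rewrite /inner adjmx_mul mulmxA -(mulmxA (adjmx x)) W_iso mulmx1.
by rewrite !frame_mulmx inner_vec2 !mul1r.
Qed.

Lemma orthonormal_pair_polar z1 z2 w1 w2 :
  conjc z1 * z1 + conjc z2 * z2 = 1 -> conjc w1 * w1 + conjc w2 * w2 = 1 ->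
  conjc z1 * w1 + conjc z2 * w2 = 0 ->
  exists r a b g, [/\ 0 <= r <= 1, z1 = rC r * expi a, z2 = rC (sfun r) * expi b,
    w1 = - rC (sfun r) * expi (g - b) & w2 = rC r * expi (g - a)].
Proof.
move=> zz ww zw; set mu := z1 * w2 - z2 * w1.
(* Orthogonality forces (w1, w2) = mu (- conj z2, conj z1), and normalization |mu| = 1. *)
have w1E : w1 = - (mu * conjc z2).
  apply/eqP; rewrite -addr_eq0.
  have -> : w1 + mu * conjc z2 =
      z1 * (conjc z1 * w1 + conjc z2 * w2) + w1 * (1 - (conjc z1 * z1 + conjc z2 * z2)).
    by rewrite /mu; ring.
  by rewrite zw zz subrr !mulr0 addr0.
have w2E : w2 = mu * conjc z1.
  apply/eqP; rewrite -subr_eq0.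
  have -> : w2 - mu * conjc z1 =
      z2 * (conjc z1 * w1 + conjc z2 * w2) + w2 * (1 - (conjc z1 * z1 + conjc z2 * z2)).
    by rewrite /mu; ring.
  by rewrite zw zz subrr !mulr0 addr0.
have mu_unit : conjc mu * mu = 1.
  transitivity (conjc mu * mu * (conjc z1 * z1 + conjc z2 * z2)); first by rewrite zz mulr1.
  by rewrite -ww w1E w2E !conjcN !conjcM !conjcK; ring.
have [r [a [r_ge0 z1E]]] := polar z1.
have [s [b [s_ge0 z2E]]] := polar z2.
have [t [g [t_ge0 muE]]] := polar mu.
have rs : r ^+ 2 + s ^+ 2 = 1.
  by apply: rC_inj; rewrite rCD -(normsq_polar r a) -(normsq_polar s b) -z1E -z2E.
have mu_phase : mu = expi g.
  have : t ^+ 2 = 1 by apply: rC_inj; rewrite -(normsq_polar t g) -muE.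
  by move=> t2; rewrite muE (_ : t = 1); [exact: mul1r | nra].
have sE : sfun r = s by rewrite /sfun -rs addrAC subrr add0r sqrtr_sqr ger0_norm.
exists r, a, b, g; split => //; first by apply/andP; split=> //; nra.
- by rewrite sE.
- by rewrite w1E mu_phase z2E sE conjcM conj_rC conj_expi expiD; ring.
- by rewrite w2E mu_phase z1E conjcM conj_rC conj_expi expiD; ring.
Qed.

Lemma onb2_overlaps_polar p q x y : onb2 p q -> onb2 x y ->
  exists r a b g, [/\ 0 <= r <= 1, inner p x = rC r * expi a,
    inner q x = rC (sfun r) * expi b, inner p y = - rC (sfun r) * expi (g - b)
    & inner q y = rC r * expi (g - a)].
Proof.
move=> onb_pq /onb2_inner[xx yy xy _].
by apply: orthonormal_pair_polar; rewrite -(parseval _ _ onb_pq).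
Qed.

Section Gauge.
Variables (xi : int -> int -> vec) (lam : R) (th ph : int -> R).
Hypothesis onb_xi : forall n, onb2 (xi n (n + 1)) (xi n (n - 1)).

Definition gauge n := frame (expi (th n)) (expi (ph n)) (xi n (n + 1)) (xi n (n - 1)).

Lemma gauge_unitary n : unitary2 (gauge n).
Proof. by apply: frame_unitary; rewrite ?conj_expi ?expi_mulN. Qed.

Lemma gauge_up m y :
  expi lam *: (gauge (m - 1) *m ketbra (xi (m - 1) m) y *m adjmx (gauge m)) =
  ketbra e1 (vec2 (expi (th m - (lam + th (m - 1))) * inner (xi m (m + 1)) y)
                  (expi (ph m - (lam + th (m - 1))) * inner (xi m (m - 1)) y)).
Proof.
have [pp _ _ qp] := onb2_inner (onb_xi (m - 1)); rewrite subrK in pp qp.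
rewrite ketbra_conj /gauge !frame_mulmx subrK pp qp mulr1 mulr0 vec2_e1.
rewrite ketbraZl scalerA ketbra_scale -expiD conj_expi vec2Z !mulrA -!expiD.
by rewrite !(addrC (- (lam + _))).
Qed.

Lemma gauge_down m y :
  expi lam *: (gauge (m + 1) *m ketbra (xi (m + 1) m) y *m adjmx (gauge m)) =
  ketbra e2 (vec2 (expi (th m - (lam + ph (m + 1))) * inner (xi m (m + 1)) y)
                  (expi (ph m - (lam + ph (m + 1))) * inner (xi m (m - 1)) y)).
Proof.
have [_ qq pq _] := onb2_inner (onb_xi (m + 1)); rewrite addrK in qq pq.
rewrite ketbra_conj /gauge !frame_mulmx addrK qq pq mulr1 mulr0 vec2_e2.
rewrite ketbraZl scalerA ketbra_scale -expiD conj_expi vec2Z !mulrA -!expiD.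
by rewrite !(addrC (- (lam + _))).
Qed.

End Gauge.

Lemma gauge_phases_exist (ap bp gp am bm gm : R) :
  exists (lam s1 s2 : R) (th ph : int -> R),
  (forall m, 0 <= m ->
     [/\ th m - (lam + th (m - 1)) + ap = 0, ph m - (lam + th (m - 1)) + bp = 0,
         th m - (lam + ph (m + 1)) + (gp - bp) = s1
       & ph m - (lam + ph (m + 1)) + (gp - ap) = s1])
  /\ (forall m, m < 0 ->
     [/\ th m - (lam + th (m - 1)) + am = 0, ph m - (lam + th (m - 1)) + bm = s2,
         th m - (lam + ph (m + 1)) + (gm - bm) = 0
       & ph m - (lam + ph (m + 1)) + (gm - am) = s2]).
Proof.
(* th has slope lam - a on each half-line and ph is read off the second equation;
   the third equation at m = -1 then forces 2 lam = bp + gm - bm. *)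
pose lam := (bp + gm - bm) / 2.
have lam2 : lam + lam = bp + gm - bm by rewrite /lam; field.
pose th (k : int) := if 0 <= k then k%:~R * (lam - ap)
                     else (k + 1)%:~R * (lam - am) - (lam - ap).
pose ph (k : int) := if 0 <= k then th k + ap - bp else th k + am - bm + gm - (lam + lam).
exists lam, (gp - (lam + lam)), (gm - (lam + lam)), th, ph.
split=> m m_sgn; rewrite /ph /th; repeat case: ifP => ?; try lia;
  try (have -> : m = 0 by lia); try (have -> : m = -1 by lia);
  by split; rewrite ?intrD ?intrB /=; lra.
Qed.

Lemma complete_two_phase_equiv U : complete_two_phase U ->
  exists rp rm s1 s2, [/\ 0 <= rp <= 1, 0 <= rm <= 1 & unitary_equiv U (Uparam rp rm s1 s2)].
Proof.
case=> _ [xi [zeta [xp1 [xp2 [zp1 [zp2 [xm1 [xm2 [zm1 [zm2]]]]]]]]]].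
case=> -[onb_xi [onb_zeta U_blocks]] [const_p const_m].
have [onb_xp onb_zp] : onb2 xp1 xp2 /\ onb2 zp1 zp2.
  by have [<- <- <- <-] := const_p 0 (lexx 0); split; [apply: onb_xi | apply: onb_zeta].
have [onb_xm onb_zm] : onb2 xm1 xm2 /\ onb2 zm1 zm2.
  by have [<- <- <- <-] := const_m (-1) (lexx _); split; [apply: onb_xi | apply: onb_zeta].
have [rp [ap [bp [gp [rp_bnd Op1 Op2 Op3 Op4]]]]] := onb2_overlaps_polar onb_xp onb_zp.
have [rm [am [bm [gm [rm_bnd Om1 Om2 Om3 Om4]]]]] := onb2_overlaps_polar onb_xm onb_zm.
have [lam [s1 [s2 [th [ph [Ep Em]]]]]] := gauge_phases_exist ap bp gp am bm gm.
exists rp, rm, s1, s2; split=> //; exists lam, (gauge xi th ph).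
split=> [n | n m]; first exact: gauge_unitary.
rewrite U_blocks /Uparam; case: (eqVneq n (m - 1)) => [-> | n_up].
  rewrite gauge_up //; have [m_ge0 | m_lt0] := lerP 0 m.
    have [-> -> -> _] := const_p m m_ge0; have [E1 E2 _ _] := Ep m m_ge0.
    by rewrite Op1 Op2 !expi_rotate E1 E2 expi0 !mulr1.
  have [-> -> -> _] := const_m m (ltac:(lia)); have [E1 E2 _ _] := Em m m_lt0.
  by rewrite Om1 Om2 !expi_rotate E1 E2 expi0 mulr1 mulrC.
case: (eqVneq n (m + 1)) => [-> | n_dn]; last by rewrite mulmx0 mul0mx scaler0.
rewrite gauge_down //; have [m_ge0 | m_lt0] := lerP 0 m.
  have [-> -> _ ->] := const_p m m_ge0; have [_ _ E3 E4] := Ep m m_ge0.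
  by rewrite Op3 Op4 !expi_rotate E3 E4 mulNr !(mulrC (rC _)).
have [-> -> _ ->] := const_m m (ltac:(lia)); have [_ _ E3 E4] := Em m m_lt0.
by rewrite Om3 Om4 !expi_rotate E3 E4 expi0 mulr1 mulrC.
Qed.

Lemma unitary_equiv_refl U : unitary_equiv U U.
Proof.
exists 0, (fun=> 1%:M); split=> [n | n m]; last by rewrite expi0 scale1r mul1mx adjmx1 mulmx1.
by rewrite /unitary2 adjmx1 mul1mx.
Qed.

Definition loop_trace (U : blockop R) (n : int) : C := \tr (U n (n + 1) *m U (n + 1) n).

Lemma loop_trace_equiv (U1 U2 : blockop R) : unitary_equiv U1 U2 ->
  exists lam, forall n, loop_trace U2 n = expi (lam + lam) * loop_trace U1 n.
Proof.
case=> lam [W [W_unitary W_conj]]; exists lam => n.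
rewrite /loop_trace -!W_conj -scalemxAl -scalemxAr !scalerA mxtraceZ -expiD; congr (_ * _).
have -> : W n *m U1 n (n + 1) *m adjmx (W (n + 1)) *m (W (n + 1) *m U1 (n + 1) n *m adjmx (W n))
    = W n *m (U1 n (n + 1) *m U1 (n + 1) n) *m adjmx (W n).
  by rewrite !mulmxA -(mulmxA _ (adjmx _)) (W_unitary (n + 1)).1 mulmx1.
by rewrite mxtrace_mulC !mulmxA (W_unitary n).1 mul1mx.
Qed.

Lemma mxtrace_ketbra_mul x y p q : \tr (ketbra x y *m ketbra p q) = inner y p * inner q x.
Proof. by rewrite ketbra_mul mxtraceZ mxtrace_ketbra. Qed.

Lemma loop_trace_Uparam rp rm s1 s2 n :
  loop_trace (Uparam rp rm s1 s2) n =
  if 0 <= n then - (rC (sfun rp ^+ 2) * expi (- s1))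
  else if n == -1 then - rC (sfun rp * sfun rm)
  else - (rC (sfun rm ^+ 2) * expi (- s2)).
Proof.
have n_up : n == n + 1 - 1 by rewrite addrK.
have n_dn : (n + 1 == n - 1) = false by apply/negbTE/eqP; lia.
rewrite /loop_trace /Uparam n_up n_dn eqxx mxtrace_ketbra_mul.
case: (lerP 0 n) => n_sgn; last case: (eqVneq n (-1)) => [-> /= | n_neq].
- rewrite (_ : 0 <= n + 1) ?inner_e1 ?inner_e2; last by lia.
  by rewrite !conjcN !conjcM !conj_rC !conj_expi rCX; ring.
- by rewrite inner_e1 inner_e2 conjcN !conj_rC rCM; ring.
- rewrite (_ : 0 <= n + 1 = false) ?inner_e1 ?inner_e2; last by lia.
  by rewrite !conjcN !conjcM !conj_rC !conj_expi rCX; ring.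
Qed.

Lemma sfun_gt0 r : 0 < r < 1 -> 0 < sfun r.
Proof. by move=> /andP[r_gt0 r_lt1]; rewrite sqrtr_gt0; nra. Qed.

Lemma sfun_sqr_inj r r' : 0 <= r <= 1 -> 0 <= r' <= 1 -> sfun r ^+ 2 = sfun r' ^+ 2 -> r = r'.
Proof.
move=> /andP[r_ge0 r_le1] /andP[r'_ge0 r'_le1].
rewrite !sqr_sqrtr; [move=> e | nra | nra].
by apply/eqP; rewrite -(eqrXn2 (n := 2)) // -subr_eq0; apply/eqP; lra.
Qed.

Lemma Uparam_equiv_inj rp rm s1 s2 rp' rm' s1' s2' :
  0 < rp < 1 -> 0 < rm < 1 -> 0 < rp' < 1 -> 0 < rm' < 1 ->
  0 <= s1 < 2 * pi -> 0 <= s2 < 2 * pi -> 0 <= s1' < 2 * pi -> 0 <= s2' < 2 * pi ->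
  unitary_equiv (Uparam rp rm s1 s2) (Uparam rp' rm' s1' s2') ->
  [/\ rp = rp', rm = rm', s1 = s1' & s2 = s2'].
Proof.
move=> rp_bnd rm_bnd rp'_bnd rm'_bnd s1_bnd s2_bnd s1'_bnd s2'_bnd /loop_trace_equiv[lam lt_eq].
have [sp_gt0 sm_gt0] := (sfun_gt0 rp_bnd, sfun_gt0 rm_bnd).
have [sp'_gt0 sm'_gt0] := (sfun_gt0 rp'_bnd, sfun_gt0 rm'_bnd).
have weak_bnd r : 0 < r < 1 -> 0 <= r <= 1 by case/andP=> r0 r1; rewrite !ltW.
have angle_eq a a' : 0 <= a < 2 * pi -> 0 <= a' < 2 * pi -> expi (- a') = expi (- a) -> a = a'.
  move=> a_bnd a'_bnd /(congr1 conjc); rewrite !conj_expi !opprK => e.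
  exact: expi_inj.
have phase1 : expi (lam + lam) = 1.
  move: (lt_eq (-1)); rewrite !loop_trace_Uparam /=.
  rewrite -[rC (sfun rp' * _)]mulr1 -[rC (sfun rp * _)]mulr1 -expi0 mulrN expi_rotate.
  by move=> /oppr_inj/polar_inj[]; rewrite ?mulr_gt0 // addr0 expi0.
move: (lt_eq 0) (lt_eq (-2)); rewrite phase1 !mul1r !loop_trace_Uparam /=.
move=> /oppr_inj/polar_inj[]; rewrite ?exprn_gt0 // => sp_eq s1_eq.
move=> /oppr_inj/polar_inj[]; rewrite ?exprn_gt0 // => sm_eq s2_eq.
split; [ | | exact: angle_eq | exact: angle_eq]; apply: sfun_sqr_inj; by rewrite ?weak_bnd.
Qed.

End TwoPhaseQuantumWalks.

Theorem theorem2p12 (R : realType) :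
  (forall U : blockop R, complete_two_phase U ->
     exists rp rm s1 s2 : R,
       [/\ 0 <= rp <= 1, 0 <= rm <= 1 & unitary_equiv U (Uparam rp rm s1 s2)])
  /\
  (forall rp rm s1 s2 rp' rm' s1' s2' : R,
     0 < rp < 1 -> 0 < rm < 1 -> 0 < rp' < 1 -> 0 < rm' < 1 ->
     0 <= s1 < 2 * pi -> 0 <= s2 < 2 * pi ->
     0 <= s1' < 2 * pi -> 0 <= s2' < 2 * pi ->
     (unitary_equiv (Uparam rp rm s1 s2) (Uparam rp' rm' s1' s2')
      <-> [/\ rp = rp', rm = rm', s1 = s1' & s2 = s2'])).
Proof.
split; first exact: complete_two_phase_equiv.
move=> rp rm s1 s2 rp' rm' s1' s2' rp_bnd rm_bnd rp'_bnd rm'_bnd s1_bnd s2_bnd s1'_bnd s2'_bnd.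
split; first exact: Uparam_equiv_inj.
by case=> <- <- <- <-; apply: unitary_equiv_refl.
Qed.
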